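(* Let $V$ be a finite set, $\mathcal{F}\subseteq 2^V$ a minimal hereditary family with $\delta(\mathcal{F})\ge 12$, and let $x\in V$ be mini-weight. Then: (1) $|\mathcal{Q}(x)|=2$; (2) writing $\mathcal{Q}(x)=\{Q_1,Q_2\}$, we have $|Q_1\cap Q_2|=3$ and $\mathcal{F}(x)=\{F\setminus\{x\}: x\in F\subseteq Q_i \text{ for some } i\in\{1,2\}\}$; (3) $u(x)=5.3-\frac{2}{15}$.
   Context: Let $V$ be a finite set. A family $\mathcal{F}\subseteq 2^V$ is hereditary if $F'\subseteq F\in\mathcal{F}$ implies $F'\in\mathcal{F}$. For $x\in V$: the link is $\mathcal{F}(x)=\{F\setminus\{x\}: x\in F\in\mathcal{F}\}$, $d_{\mathcal{F}}(x)=|\mathcal{F}(x)|$, $\delta(\mathcal{F})=\min_{x\in V}d_{\mathcal{F}}(x)$. For $A\subseteq V$, $d_{\mathcal{F}}(A)=|\{F\in\mathcal{F}: A\subseteq F\}|$. A set $F\in\mathcal{F}$ is maximal if no other member strictly contains it; a hereditary $\mathcal{F}$ with $\delta(\mathcal{F})\ge 12$ is minimal if $\delta(\mathcal{F}\setminus\{F\})\le 11$ for every maximal $F\in\mathcal{F}$. $f_i(x)$ denotes the number of $i$-element sets in $\mathcal{F}(x)$. A vertex $x$ is mini-weight if $f_1(x)=4$, $f_2(x)=5$, $f_3(x)=2$. $\mathcal{Q}=\{Q\in\mathcal{F}:|Q|=4\}$ and $\mathcal{Q}(x)=\{Q\in\mathcal{Q}: x\in Q\}$. Weights: for $x\in F\in\mathcal{F}$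 define $\omega(x,F)$ as follows. If $|F|\ne 3$, $\omega(x,F)=1/|F|$. If $|F|=3$: if $F$ is contained in some 4-element member of $\mathcal{F}$, every element of $F$ gets $\omega=1/3$; otherwise order the three 2-subsets of $F$ as $e_1,e_2,e_3$ with $d_{\mathcal{F}}(e_1)\le d_{\mathcal{F}}(e_2)\le d_{\mathcal{F}}(e_3)$; if $d_{\mathcal{F}}(e_2)\le 4<d_{\mathcal{F}}(e_3)$, the two elements of $e_3$ get $\omega=7/20$ and the element of $F\setminus e_3$ gets $6/20$; else if $d_{\mathcal{F}}(e_1)\le 4<d_{\mathcal{F}}(e_2)$, the two elements of $e_1$ get $7/20$ and the element of $F\setminus e_1$ gets $6/20$; otherwise every element of $F$ gets $1/3$. The weight of $x$ is $u(x)=\sum_{x\in F\in\mathcal{F}}\omega(x,F)$. *)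

From mathcomp Require Import all_boot all_order all_algebra.
Set Implicit Arguments. Unset Strict Implicit. Unset Printing Implicit Defensive.
Import Order.TTheory GRing.Theory Num.Theory.

Section Defs.
Variable V : finType.
Implicit Types (F : {set {set V}}) (A B : {set V}) (x : V).

Definition hereditary F : Prop :=
  forall A B, B \in F -> A \subset B -> A \in F.

Definition link F x : {set {set V}} := [set A :\ x | A in [set B in F | x \in B]].

Definition deg F x : nat := #|link F x|.

Definition degS F A : nat := #|[set B in F | A \subset B]|.

(* delta(F) >= k  (V nonempty in all uses: delta = min over x in V) *)
Definition delta_ge F (k : nat) : Prop := forall x, k <= deg F x.
Definition delta_le F (k : nat) : Prop := exists x, deg F x <= k.

Definition maximal F B : Prop :=
  B \in F /\ forall C, C \in F -> B \subset C -> C = B.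

Definition minimal_family F : Prop :=
  [/\ hereditary F, delta_ge F 12 &
      forall B, maximal F B -> delta_le (F :\ B) 11].

Definition fdeg F x (i : nat) : nat := #|[set A in link F x | #|A| == i]|.

Definition mini_weight F x : Prop :=
  [/\ fdeg F x 1 = 4, fdeg F x 2 = 5 & fdeg F x 3 = 2].

Definition Qx F x : {set {set V}} := [set Q in F | (#|Q| == 4) && (x \in Q)].

Definition nbig F B : nat :=
  #|[set e : {set V} | (e \subset B) && (#|e| == 2) && (4 < degS F e)]|.

(* For |B| = 3 not contained in a 4-element
   member: with e1,e2,e3 the 2-subsets ordered by d_F,
   "d(e2) <= 4 < d(e3)"  <=> exactly one 2-subset has d > 4 (it is e3);
   "d(e1) <= 4 < d(e2)"  <=> exactly two 2-subsets have d > 4 (e1 is the other).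
   The 2-subset of B not containing x is B :\ x. *)
Definition omega F x B : rat :=
  (if #|B| != 3 then (#|B|%:R)^-1
  else if [exists Q in F, (#|Q| == 4) && (B \subset Q)] then 3%:R^-1
  else if nbig F B == 1 then
    (* x in e3 iff B :\ x is not e3 iff d(B :\ x) <= 4 *)
    (if (degS F (B :\ x) <= 4)%N then 7%:R / 20%:R else 6%:R / 20%:R)
  else if nbig F B == 2 then
    (* x in e1 iff B :\ x is not e1 iff d(B :\ x) > 4 *)
    (if (4 < degS F (B :\ x))%N then 7%:R / 20%:R else 6%:R / 20%:R)
  else 3%:R^-1)%R.

Definition weight F x : rat := (\sum_(B in F | x \in B) omega F x B)%R.

End Defs.

(* The link L of x is hereditary, with 4 singletons,
   5 pairs and 2 triples.  As the 4 vertices of L span 6 pairs, some pair {c, d}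
   is missing from L, so every member of L lies in N - c or in N - d (N the
   vertex set of L); these two triples are therefore exactly the triples of L.
   Hence Q(x) = {x + (N - c), x + (N - d)}, whose members meet in x and the two
   vertices of N - {c, d}.  Every set through x lies in one of these 4-sets, so
   each gets weight 1/|B| and u(x) = 1 + 4/2 + 5/3 + 2/4 = 31/6. *)

From mathcomp Require Import all_boot all_order all_algebra.
Import GRing.Theory Num.Theory.
Set Implicit Arguments.
Unset Strict Implicit.
Unset Printing Implicit Defensive.
Local Open Scope ring_scope.

Lemma exists_in_set2 (T : finType) (a b : T) (p : pred T) :
  [exists y in [set a; b], p y] = p a || p b.
Proof.
apply/existsP/orP => [[y]|[pa|pb]];
  [|by exists a; rewrite !inE eqxx | by exists b; rewrite !inE eqxx orbT].
by rewrite !inE => /andP[/orP[]/eqP-> py]; [left|right].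
Qed.

Section Link.
Variables (V : finType) (F : {set {set V}}) (x : V).

Lemma mem_link A : (A \in link F x) = (x \notin A) && (x |: A \in F).
Proof.
apply/imsetP/andP => [[B]|[xA AF]].
  by rewrite inE => /andP[BF xB] ->; rewrite setD11 setD1K.
by exists (x |: A); rewrite ?setU1K // inE AF setU11.
Qed.

Definition link_vertices := [set y | [set y] \in link F x].

Definition link_triangles := [set A in link F x | #|A| == 3%N].

Definition triangle_covered :=
  forall A, A \in link F x -> exists2 T, T \in link_triangles & A \subset T.

Lemma card_link_vertices : #|link_vertices| = fdeg F x 1.
Proof.
rewrite /fdeg -(card_imset _ (@set1_inj V)); apply: eq_card => A.
rewrite inE; apply/imsetP/andP => [[y]|[AL /cards1P[y Ay]]].
  by rewrite inE => yL ->; rewrite cards1.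
by exists y; rewrite // inE -Ay.
Qed.

Lemma Qx_link_triangles : Qx F x = [set x |: T | T in link_triangles].
Proof.
apply/setP => Q; rewrite inE; apply/andP/imsetP => [[QF /andP[/eqP Q4 xQ]]|[T]].
  exists (Q :\ x); rewrite ?setD1K // inE mem_link setD11 setD1K // QF /=.
  by move: Q4; rewrite (cardsD1 x) xQ add1n => -[->].
rewrite inE mem_link => /andP[/andP[xT TF] /eqP T3] ->.
by rewrite TF cardsU1 xT T3 setU11.
Qed.

Lemma triangle_notin T : T \in link_triangles -> x \notin T.
Proof. by rewrite inE mem_link => /andP[/andP[]]. Qed.

Lemma omega_inv_card (B : {set V}) :
    (#|B| != 3%N) || [exists Q in F, (#|Q| == 4%N) && (B \subset Q)] ->
  omega F x B = #|B|%:R^-1.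
Proof. by rewrite /omega; case: eqP => [->|] //= ->. Qed.

Lemma weight_triangle_covered :
  triangle_covered -> weight F x = \sum_(A in link F x) (#|A|.+1)%:R^-1.
Proof.
move=> covered; rewrite /weight /link big_imset /=; last first.
  move=> B1 B2; rewrite !inE => /andP[_ xB1] /andP[_ xB2] eqB.
  by rewrite -(setD1K xB1) eqB setD1K.
apply: eq_big => [B|B /andP[BF xB]]; first by rewrite inE.
have BxL : B :\ x \in link F x by rewrite mem_link setD11 setD1K.
have -> : #|B :\ x|.+1 = #|B| by rewrite (cardsD1 x B) xB.
rewrite omega_inv_card //.
apply/orP; case: (eqVneq #|B| 3%N) => [_|]; [right|by left].
have [T] := covered _ BxL; rewrite inE mem_link => /andP[/andP[xT TF] /eqP T3] BxT.
apply/existsP; exists (x |: T); rewrite TF cardsU1 xT T3 /=.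
by rewrite -(setD1K xB) setUS.
Qed.

Lemma sum_link_fdeg m :
    (forall A, A \in link F x -> #|A| <= m)%N ->
  \sum_(A in link F x) (#|A|.+1)%:R^-1 =
  \sum_(k < m.+1) (k.+1)%:R^-1 *+ fdeg F x k :> rat.
Proof.
move=> small.
rewrite (partition_big (fun A : {set V} => inord #|A| : 'I_m.+1) predT) //=.
apply: eq_bigr => k _; rewrite /fdeg -sumr_const.
apply: eq_big => [A|A /andP[AL /eqP <-]]; last by rewrite inordK ?ltnS ?small.
rewrite inE; case AL: (A \in link F x) => //=.
by rewrite -val_eqE /= inordK ?ltnS ?small.
Qed.

End Link.

Section HereditaryLink.
Variables (V : finType) (F : {set {set V}}) (x : V).
Hypothesis hered : hereditary F.

Local Notation N := (link_vertices F x).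

Lemma link_hereditary : hereditary (link F x).
Proof.
move=> A B; rewrite !mem_link => /andP[xB BF] AB; apply/andP; split.
  by apply: contra xB; apply: subsetP.
by apply: hered BF _; apply: setUS.
Qed.

Lemma link_sub_vertices A : A \in link F x -> A \subset N.
Proof.
move=> AL; apply/subsetP => y yA; rewrite inE.
by apply: link_hereditary AL _; rewrite sub1set.
Qed.

Lemma fdeg0 A : A \in link F x -> fdeg F x 0 = 1%N.
Proof.
move=> AL; rewrite /fdeg -(cards1 (@set0 V)); apply: eq_card => B.
rewrite !inE cards_eq0 andb_idl // => /eqP ->.
exact: link_hereditary AL (sub0set A).
Qed.

Lemma exists_link_nonedge :
    (fdeg F x 2 < 'C(fdeg F x 1, 2))%N ->
  exists c d, [/\ c != d, c \in N, d \in N & [set c; d] \notin link F x].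
Proof.
rewrite -card_link_vertices -cards_draws => lt_edges.
have /subsetPn[A] : ~~ ([set A : {set V} | A \subset N & #|A| == 2%N]
                         \subset [set A in link F x | #|A| == 2%N]).
  by apply: contraL lt_edges => /subset_leq_card; rewrite leqNgt.
rewrite !inE => /andP[AN A2]; rewrite A2 andbT => AL.
have /cards2P[c [d [cd defA]]] := A2; exists c, d.
by rewrite -defA; split=> //; apply: (subsetP AN); rewrite defA !inE eqxx ?orbT.
Qed.

Lemma link_avoid_nonedge c d A :
    [set c; d] \notin link F x -> A \in link F x ->
  (A \subset N :\ c) || (A \subset N :\ d).
Proof.
move=> cdL AL; rewrite !subsetD1 link_sub_vertices //= -negb_and.
apply: contra cdL => /andP[cA dA]; apply: link_hereditary AL _.
by apply/subsetP => y; rewrite !inE => /orP[] /eqP ->.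
Qed.

Lemma link_triangles_nonedge c d :
    c \in N -> d \in N -> [set c; d] \notin link F x ->
    #|N| = 4%N -> fdeg F x 3 = 2%N ->
  link_triangles F x = [set N :\ c; N :\ d].
Proof.
move=> cN dN cdL N4 f3.
have card3 y : y \in N -> #|N :\ y| = 3%N.
  by move=> yN; move: N4; rewrite (cardsD1 y) yN add1n => -[].
apply/eqP; rewrite eqEcard; apply/andP; split.
  apply/subsetP => A; rewrite !inE => /andP[AL /eqP A3].
  case/orP: (link_avoid_nonedge cdL AL) => sub.
    by rewrite eqEcard sub card3 ?A3.
  by rewrite orbC eqEcard sub card3 ?A3.
by rewrite [#|link_triangles F x|]f3 cards2; case: eqP.
Qed.

Lemma link_two_triangles :
    fdeg F x 1 = 4%N -> fdeg F x 2 = 5%N -> fdeg F x 3 = 2%N ->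
  exists P R, [/\ #|P :&: R| = 2%N, link_triangles F x = [set P; R]
                & triangle_covered F x].
Proof.
move=> f1 f2 f3; have N4 : #|N| = 4%N by rewrite card_link_vertices.
have [|c [d [cd cN dN cdL]]] := exists_link_nonedge; first by rewrite f1 f2.
have triangles := link_triangles_nonedge cN dN cdL N4 f3.
exists (N :\ c), (N :\ d); split=> //.
  have -> : (N :\ c) :&: (N :\ d) = N :\: [set c; d].
    apply/setP => y; rewrite !inE.
    by case: (y == c); case: (y == d); case: ([set y] \in _).
  rewrite cardsD N4 (setIidPr _) ?cards2 ?cd //.
  by rewrite subUset !sub1set cN dN.
move=> A AL; rewrite triangles.
by case/orP: (link_avoid_nonedge cdL AL) => sub; [exists (N :\ c) | exists (N :\ d)];
  rewrite // !inE eqxx ?orbT.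
Qed.

Lemma link_triangle_covered_quads :
    triangle_covered F x ->
  link F x = [set B :\ x | B in [set B : {set V} |
                (x \in B) && [exists Q in Qx F x, B \subset Q]]].
Proof.
move=> covered; apply/setP => A; apply/idP/imsetP => [AL|[B]].
  have [T TL AT] := covered _ AL.
  have xA : x \notin A by move: AL; rewrite mem_link => /andP[].
  exists (x |: A); last by rewrite setU1K.
  rewrite inE setU11; apply/existsP; exists (x |: T).
  by rewrite Qx_link_triangles imset_f ?setUS.
rewrite inE => /andP[xB /existsP[Q /andP[QQ BQ]]] ->.
apply/imsetP; exists B => //; rewrite inE xB andbT.
by move: QQ; rewrite inE => /andP[QF _]; apply: hered QF BQ.
Qed.

End HereditaryLink.

Section TwoTriangles.
Variables (V : finType) (F : {set {set V}}) (x : V) (P R : {set V}).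
Hypotheses (PR2 : #|P :&: R| = 2%N) (triangles : link_triangles F x = [set P; R]).

Let xP : x \notin P. Proof. by apply: (@triangle_notin _ F); rewrite triangles set21. Qed.
Let xR : x \notin R. Proof. by apply: (@triangle_notin _ F); rewrite triangles set22. Qed.

Lemma Qx_two_triangles : Qx F x = [set x |: P; x |: R].
Proof. by rewrite Qx_link_triangles triangles imsetU1 imset_set1. Qed.

Lemma card_Qx_two_triangles : #|Qx F x| = 2%N.
Proof.
have P3 : #|P| = 3%N by move: (set21 P R); rewrite -triangles inE => /andP[_ /eqP].
have neqPR : P != R by apply/eqP => PR; move: PR2; rewrite -PR setIid P3.
rewrite Qx_two_triangles cards2; suff -> : x |: P != x |: R by [].
by apply: contraNneq neqPR => /(congr1 (fun Q => Q :\ x)); rewrite !setU1K // => ->.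
Qed.

Lemma card_setI_Qx_two_triangles Q1 Q2 :
  Q1 \in Qx F x -> Q2 \in Qx F x -> Q1 != Q2 -> #|Q1 :&: Q2| = 3%N.
Proof.
have cardPR : #|(x |: P) :&: (x |: R)| = 3%N.
  by rewrite -setUIr cardsU1 in_setI (negbTE xP) PR2.
rewrite Qx_two_triangles !inE.
by do 2![case/orP=> /eqP->]; rewrite ?eqxx // setIC.
Qed.

End TwoTriangles.

Theorem mainTheorem6 (V : finType) (F : {set {set V}}) (x : V) :
  minimal_family F -> mini_weight F x ->
  [/\ #|Qx F x| = 2%N,
      (forall Q1 Q2 : {set V}, Q1 != Q2 -> Qx F x = [set Q1; Q2] ->
         #|Q1 :&: Q2| = 3%N /\
         link F x = [set A :\ x | A in [set B : {set V} |
                       (x \in B) && ((B \subset Q1) || (B \subset Q2))]])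
    & weight F x = 53%:R / 10%:R - 2%:R / 15%:R].
Proof.
case=> hered _ _ [f1 f2 f3].
have [P [R [PR2 triangles covered]]] := link_two_triangles hered f1 f2 f3.
split.
- exact: card_Qx_two_triangles PR2 triangles.
- move=> Q1 Q2 Q12 QxE; split.
    by apply: (card_setI_Qx_two_triangles PR2 triangles); rewrite ?QxE ?set21 ?set22.
  rewrite (link_triangle_covered_quads hered covered) QxE.
  by under eq_finset => B do rewrite exists_in_set2.
- have small A : A \in link F x -> (#|A| <= 3)%N.
    by case/covered=> T; rewrite inE => /andP[_ /eqP <-] /subset_leq_card.
  have [A AL] : exists A, A \in link F x.
    by exists P; have := set21 P R; rewrite -triangles inE => /andP[].
  rewrite (weight_triangle_covered covered) (sum_link_fdeg small).
  rewrite !big_ord_recl big_ord0 (fdeg0 hered AL) f1 f2 f3.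
  by apply/eqP; vm_compute.
Qed.
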